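(* Let $\mathcal{F}:(\mathcal{K},c)\to(\mathcal{K}',c')$ be a bilax functor with compatible Yang–Baxter operator, $b:A\to A$ a $c$-bimonad in $\mathcal{K}$, and $x:A\to B$ a right relative bimonad module over $b$ (right action $\lhd$, right coaction $\rho$). Then $\mathcal{F}(x)$, with right action $\mathcal{F}(\lhd)\cdot\mathcal{F}^2_{x,b}$ and right coaction $\mathcal{F}_{2;x,b}\cdot\mathcal{F}(\rho)$, is a right relative bimonad module over the $c'$-bimonad $\mathcal{F}(b)$ (with structure $\mu^{\mathcal{F}}=\mathcal{F}(\mu)\cdot\mathcal{F}^2_{b,b}$, $\eta^{\mathcal{F}}=\mathcal{F}(\eta)\cdot\mathcal{F}^0_A$, $\Delta^{\mathcal{F}}=\mathcal{F}_{2;b,b}\cdot\mathcal{F}(\Delta)$, $\varepsilon^{\mathcal{F}}=\mathcal{F}_{0;A}\cdot\mathcal{F}(\varepsilon)$).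
   Context: Conventions: $\circ$ horizontal composition, $\cdot$ vertical composition ($\beta\cdot\alpha$: first $\alpha$), $1$ identity 2-cells. A Yang–Baxter operator $c$ of a 2-category: natural 2-cells $c_{g,f}:g\circ f\Rightarrow f\circ g$ for 1-endocells of a common object, satisfying the Yang–Baxter equation $(c_{g,f}\circ1)\cdot(1\circ c_{h,f})\cdot(c_{h,g}\circ1)=(1\circ c_{h,g})\cdot(c_{h,f}\circ1)\cdot(1\circ c_{g,f})$ and $c_{\mathrm{id},f}=c_{f,\mathrm{id}}=1$. A $c$-bimonad: 1-endocell $b$ with monad $(\mu,\eta)$ and comonad $(\Delta,\varepsilon)$ such that $c_{b,b}$ is a left and right distributive law for both the monad and the comonad, and $(\mu\circ\mu)\cdot(1\circ c_{b,b}\circ1)\cdot(\Delta\circ\Delta)=\Delta\cdot\mu$, $\varepsilon\circ\varepsilon=\varepsilon\cdot\mu$, $\eta\circ\eta=\Delta\cdot\eta$, $\varepsilon\cdot\eta=1$. A bilax functor $\mathcal{F}$ is lax ($\mathcal{F}^2_{g,f}:\mathcal{F}(g)\circ\mathcal{F}(f)\Rightarrow\mathcal{F}(gf)$, $\mathcal{F}^0$) and colax ($\mathcal{F}_{2;g,f}:\mathcal{F}(gf)\Rightarrow\mathcal{F}(g)\circ\mathcal{F}(f)$, $\mathcal{F}_0$) with a Yang–Baxter operator $\nu$ which is a left and right distributive law for the lax and colax structures, satisfies the unit–counit laws, and the bilaxity conditions $(\mathcal{F}^2_{g,h}\circ\mathcal{F}^2_{f,k})\cdot(1\circ\nu_{f,h}\circ1)\cdot(\mathcal{F}_{2;g,f}\circ\mathcal{F}_{2;h,k})=\mathcal{F}_{2;gh,fk}\cdot\mathcal{F}(1\circ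 c_{f,h}\circ1)\cdot\mathcal{F}^2_{gf,hk}$ for $A\xrightarrow{k}B\xrightarrow{h}B\xrightarrow{f}B\xrightarrow{g}C$, $\mathcal{F}^0\circ\mathcal{F}^0=\mathcal{F}_{2;\mathrm{id},\mathrm{id}}\cdot\mathcal{F}^0$, $\mathcal{F}_0\circ\mathcal{F}_0=\mathcal{F}_0\cdot\mathcal{F}^2_{\mathrm{id},\mathrm{id}}$, $\mathcal{F}_0\cdot\mathcal{F}^0=1$; compatibility means $\nu_{f,g}=c'_{\mathcal{F}(f),\mathcal{F}(g)}$. A right relative bimonad module over $b$ is a 1-cell $x:A\to B$ that is a right $b$-module ($\lhd:x\circ b\Rightarrow x$, associative and unital) and a right $b$-comodule ($\rho:x\Rightarrow x\circ b$, coassociative and counital) such that $(\lhd\circ\mu)\cdot(1_x\circ c_{b,b}\circ1_b)\cdot(\rho\circ\Delta)=\rho\cdot\lhd$ as 2-cells $x\circ b\Rightarrow x\circ b$. *)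

Definition castc {H : Type} (C : H -> H -> Type) {f f' g g' : H}
  (e1 : f = f') (e2 : g = g') (a : C f g) : C f' g' :=
  match e1 in _ = f1 return C f1 g' with
  | eq_refl => match e2 in _ = g1 return C f g1 with eq_refl => a end
  end.

(* Strict 2-categories.  1-cell composition is strictly associative and
   unital (propositional equalities of 1-cells); 2-cell equations that need
   re-bracketing are stated with the transport [cst].                  *)

Record TwoCatData : Type := {
  Ob : Type;
  Hom : Ob -> Ob -> Type;
  Cell : forall A B : Ob, Hom A B -> Hom A B -> Type;
  id1 : forall A : Ob, Hom A A;
  comp1 : forall A B C : Ob, Hom B C -> Hom A B -> Hom A C;
  id2 : forall (A B : Ob) (f : Hom A B), Cell A B f f;
  vcomp : forall (A B : Ob) (f g h : Hom A B),
      Cell A B g h -> Cell A B f g -> Cell A B f h;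
  hcomp : forall (A B C : Ob) (g g' : Hom B C) (f f' : Hom A B),
      Cell B C g g' -> Cell A B f f' ->
      Cell A C (comp1 A B C g f) (comp1 A B C g' f');
  comp1A : forall (A B C D : Ob) (h : Hom C D) (g : Hom B C) (f : Hom A B),
      comp1 A C D h (comp1 A B C g f) = comp1 A B D (comp1 B C D h g) f;
  comp1_idl : forall (A B : Ob) (f : Hom A B), comp1 A B B (id1 B) f = f;
  comp1_idr : forall (A B : Ob) (f : Hom A B), comp1 A A B f (id1 A) = f
}.

Arguments Ob K : rename.
Arguments Hom K A B : rename.
Arguments Cell {K A B} f g : rename.
Arguments id1 {K} A : rename.
Arguments comp1 {K A B C} g f : rename.
Arguments id2 {K A B} f : rename.
Arguments vcomp {K A B f g h} b a : rename.
Arguments hcomp {K A B C g g' f f'} b a : rename.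
Arguments comp1A {K A B C D} h g f : rename.
Arguments comp1_idl {K A B} f : rename.
Arguments comp1_idr {K A B} f : rename.

Declare Scope tc_scope.
Delimit Scope tc_scope with tc.
Open Scope tc_scope.
Notation "g ∘ f" := (comp1 g f) (at level 40, left associativity) : tc_scope.
Notation "b ⊙ a" := (hcomp b a) (at level 40, left associativity) : tc_scope.
Notation "b • a" := (vcomp b a) (at level 50, left associativity) : tc_scope.

Definition cst {K : TwoCatData} {A B : Ob K} {f f' g g' : Hom K A B}
  (e1 : f = f') (e2 : g = g') (a : Cell f g) : Cell f' g' :=
  castc (@Cell K A B) e1 e2 a.

Record is_TwoCat (K : TwoCatData) : Prop := {
  vcompA : forall (A B : Ob K) (f g h k : Hom K A B)
      (c : Cell h k) (b : Cell g h) (a : Cell f g),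
      c • (b • a) = (c • b) • a;
  vcomp_idl : forall (A B : Ob K) (f g : Hom K A B) (a : Cell f g), id2 g • a = a;
  vcomp_idr : forall (A B : Ob K) (f g : Hom K A B) (a : Cell f g), a • id2 f = a;
  hcomp_id2 : forall (A B C : Ob K) (g : Hom K B C) (f : Hom K A B),
      id2 g ⊙ id2 f = id2 (g ∘ f);
  interchange : forall (A B C : Ob K) (g g' g'' : Hom K B C) (f f' f'' : Hom K A B)
      (b' : Cell g' g'') (b : Cell g g') (a' : Cell f' f'') (a : Cell f f'),
      (b' • b) ⊙ (a' • a) = (b' ⊙ a') • (b ⊙ a);
  hcompA : forall (A B C D : Ob K) (h h' : Hom K C D) (g g' : Hom K B C)
      (f f' : Hom K A B) (c : Cell h h') (b : Cell g g') (a : Cell f f'),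
      cst (comp1A h g f) (comp1A h' g' f') (c ⊙ (b ⊙ a)) = (c ⊙ b) ⊙ a;
  hcomp_idl : forall (A B : Ob K) (f f' : Hom K A B) (a : Cell f f'),
      cst (comp1_idl f) (comp1_idl f') (id2 (id1 B) ⊙ a) = a;
  hcomp_idr : forall (A B : Ob K) (f f' : Hom K A B) (a : Cell f f'),
      cst (comp1_idr f) (comp1_idr f') (a ⊙ id2 (id1 A)) = a
}.

Record TwoCat : Type := { tc :> TwoCatData; tc_ax : is_TwoCat tc }.

Definition mid4 {K : TwoCatData} {A X Y Z W : Ob K}
  (g : Hom K Z W) (f : Hom K Y Z) (h : Hom K X Y) (k : Hom K A X)
  : (g ∘ f) ∘ (h ∘ k) = g ∘ ((f ∘ h) ∘ k) :=
  eq_trans (eq_sym (comp1A g f (h ∘ k))) (f_equal (fun u => g ∘ u) (comp1A f h k)).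

Definition wmid {K : TwoCatData} {A X Y Z W : Ob K}
  (g : Hom K Z W) {f f' : Hom K Y Z} {h h' : Hom K X Y}
  (a : Cell (f ∘ h) (f' ∘ h')) (k : Hom K A X)
  : Cell ((g ∘ f) ∘ (h ∘ k)) ((g ∘ f') ∘ (h' ∘ k)) :=
  cst (eq_sym (mid4 g f h k)) (eq_sym (mid4 g f' h' k)) (id2 g ⊙ (a ⊙ id2 k)).

Definition YBdata (K : TwoCatData) :=
  forall (A : Ob K) (g f : Hom K A A), Cell (g ∘ f) (f ∘ g).

Record is_YB (K : TwoCatData) (c : YBdata K) : Prop := {
  yb_nat : forall (A : Ob K) (g g' f f' : Hom K A A) (b : Cell g g') (a : Cell f f'),
      c A g' f' • (b ⊙ a) = (a ⊙ b) • c A g f;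
  yb_eq : forall (A : Ob K) (f g h : Hom K A A),
      (c A g f ⊙ id2 h) • cst (comp1A g h f) (comp1A g f h) (id2 g ⊙ c A h f)
        • (c A h g ⊙ id2 f)
      = cst (comp1A f h g) (comp1A f g h) (id2 f ⊙ c A h g) • (c A h f ⊙ id2 g)
        • cst (comp1A h g f) (comp1A h f g) (id2 h ⊙ c A g f);
  yb_idl : forall (A : Ob K) (f : Hom K A A),
      cst (comp1_idl f) (comp1_idr f) (c A (id1 A) f) = id2 f;
  yb_idr : forall (A : Ob K) (f : Hom K A A),
      cst (comp1_idr f) (comp1_idl f) (c A f (id1 A)) = id2 f
}.

Record is_c_bimonad (K : TwoCatData) (c : YBdata K) (A : Ob K) (b : Hom K A A)
  (mu : Cell (b ∘ b) b) (eta : Cell (id1 A) b)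
  (De : Cell b (b ∘ b)) (ep : Cell b (id1 A)) : Prop := {
  bm_assoc : mu • (mu ⊙ id2 b) = mu • cst (comp1A b b b) eq_refl (id2 b ⊙ mu);
  bm_unitl : cst (comp1_idl b) eq_refl (mu • (eta ⊙ id2 b)) = id2 b;
  bm_unitr : cst (comp1_idr b) eq_refl (mu • (id2 b ⊙ eta)) = id2 b;
  bm_coassoc : (De ⊙ id2 b) • De = cst eq_refl (comp1A b b b) ((id2 b ⊙ De) • De);
  bm_counitl : cst eq_refl (comp1_idl b) ((ep ⊙ id2 b) • De) = id2 b;
  bm_counitr : cst eq_refl (comp1_idr b) ((id2 b ⊙ ep) • De) = id2 b;
  bm_dist_mu_l : c A b b • (mu ⊙ id2 b)
      = cst (comp1A b b b) eq_refl (id2 b ⊙ mu) • (c A b b ⊙ id2 b)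
        • cst (comp1A b b b) (comp1A b b b) (id2 b ⊙ c A b b);
  bm_dist_mu_r : c A b b • (id2 b ⊙ mu)
      = cst (eq_sym (comp1A b b b)) eq_refl (mu ⊙ id2 b) • (id2 b ⊙ c A b b)
        • cst (eq_sym (comp1A b b b)) (eq_sym (comp1A b b b)) (c A b b ⊙ id2 b);
  bm_dist_eta_l : cst (comp1_idl b) eq_refl (c A b b • (eta ⊙ id2 b))
      = cst (comp1_idr b) eq_refl (id2 b ⊙ eta);
  bm_dist_eta_r : cst (comp1_idr b) eq_refl (c A b b • (id2 b ⊙ eta))
      = cst (comp1_idl b) eq_refl (eta ⊙ id2 b);
  bm_dist_De_l : (De ⊙ id2 b) • c A b b
      = cst (comp1A b b b) (comp1A b b b) (id2 b ⊙ c A b b) • (c A b b ⊙ id2 b)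
        • cst eq_refl (comp1A b b b) (id2 b ⊙ De);
  bm_dist_De_r : (id2 b ⊙ De) • c A b b
      = cst (eq_sym (comp1A b b b)) (eq_sym (comp1A b b b)) (c A b b ⊙ id2 b)
        • (id2 b ⊙ c A b b) • cst eq_refl (eq_sym (comp1A b b b)) (De ⊙ id2 b);
  bm_dist_ep_l : cst eq_refl (comp1_idl b) ((ep ⊙ id2 b) • c A b b)
      = cst eq_refl (comp1_idr b) (id2 b ⊙ ep);
  bm_dist_ep_r : cst eq_refl (comp1_idr b) ((id2 b ⊙ ep) • c A b b)
      = cst eq_refl (comp1_idl b) (ep ⊙ id2 b);
  bm_mu_De : (mu ⊙ mu) • wmid b (c A b b) b • (De ⊙ De) = De • mu;
  bm_mu_ep : cst eq_refl (comp1_idl (id1 A)) (ep ⊙ ep) = ep • mu;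
  bm_eta_De : cst (comp1_idl (id1 A)) eq_refl (eta ⊙ eta) = De • eta;
  bm_eta_ep : ep • eta = id2 (id1 A)
}.

Record LaxColaxData (K K' : TwoCatData) : Type := {
  fo : Ob K -> Ob K';
  fmap1 : forall A B : Ob K, Hom K A B -> Hom K' (fo A) (fo B);
  fmap2 : forall (A B : Ob K) (f g : Hom K A B),
      Cell f g -> Cell (fmap1 A B f) (fmap1 A B g);
  lax2 : forall (A B C : Ob K) (g : Hom K B C) (f : Hom K A B),
      Cell (fmap1 B C g ∘ fmap1 A B f) (fmap1 A C (g ∘ f));
  lax0 : forall A : Ob K, Cell (id1 (fo A)) (fmap1 A A (id1 A));
  colax2 : forall (A B C : Ob K) (g : Hom K B C) (f : Hom K A B),
      Cell (fmap1 A C (g ∘ f)) (fmap1 B C g ∘ fmap1 A B f);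
  colax0 : forall A : Ob K, Cell (fmap1 A A (id1 A)) (id1 (fo A));
  fnu : forall (A : Ob K) (f g : Hom K A A),
      Cell (fmap1 A A f ∘ fmap1 A A g) (fmap1 A A g ∘ fmap1 A A f)
}.

Arguments fo {K K'} F A : rename.
Arguments fmap1 {K K'} F {A B} f : rename.
Arguments fmap2 {K K'} F {A B f g} a : rename.
Arguments lax2 {K K'} F {A B C} g f : rename.
Arguments lax0 {K K'} F A : rename.
Arguments colax2 {K K'} F {A B C} g f : rename.
Arguments colax0 {K K'} F A : rename.
Arguments fnu {K K'} F {A} f g : rename.

Record is_bilax (K K' : TwoCatData) (c : YBdata K) (F : LaxColaxData K K') : Prop := {
  F_vcomp : forall (A B : Ob K) (f g h : Hom K A B) (b : Cell g h) (a : Cell f g),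
      fmap2 F (b • a) = fmap2 F b • fmap2 F a;
  F_id2 : forall (A B : Ob K) (f : Hom K A B), fmap2 F (id2 f) = id2 (fmap1 F f);
  lax2_nat : forall (A B C : Ob K) (g g' : Hom K B C) (f f' : Hom K A B)
      (b : Cell g g') (a : Cell f f'),
      lax2 F g' f' • (fmap2 F b ⊙ fmap2 F a) = fmap2 F (b ⊙ a) • lax2 F g f;
  lax2_assoc : forall (A B C D : Ob K) (h : Hom K C D) (g : Hom K B C) (f : Hom K A B),
      cst (comp1A (fmap1 F h) (fmap1 F g) (fmap1 F f)) (f_equal (fmap1 F) (comp1A h g f))
        (lax2 F h (g ∘ f) • (id2 (fmap1 F h) ⊙ lax2 F g f))
      = lax2 F (h ∘ g) f • (lax2 F h g ⊙ id2 (fmap1 F f));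
  lax_unitl : forall (A B : Ob K) (f : Hom K A B),
      cst (comp1_idl (fmap1 F f)) (f_equal (fmap1 F) (comp1_idl f))
        (lax2 F (id1 B) f • (lax0 F B ⊙ id2 (fmap1 F f))) = id2 (fmap1 F f);
  lax_unitr : forall (A B : Ob K) (f : Hom K A B),
      cst (comp1_idr (fmap1 F f)) (f_equal (fmap1 F) (comp1_idr f))
        (lax2 F f (id1 A) • (id2 (fmap1 F f) ⊙ lax0 F A)) = id2 (fmap1 F f);
  colax2_nat : forall (A B C : Ob K) (g g' : Hom K B C) (f f' : Hom K A B)
      (b : Cell g g') (a : Cell f f'),
      (fmap2 F b ⊙ fmap2 F a) • colax2 F g f = colax2 F g' f' • fmap2 F (b ⊙ a);
  colax2_coassoc : forall (A B C D : Ob K) (h : Hom K C D) (g : Hom K B C) (f : Hom K A B),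
      cst (f_equal (fmap1 F) (comp1A h g f)) (comp1A (fmap1 F h) (fmap1 F g) (fmap1 F f))
        ((id2 (fmap1 F h) ⊙ colax2 F g f) • colax2 F h (g ∘ f))
      = (colax2 F h g ⊙ id2 (fmap1 F f)) • colax2 F (h ∘ g) f;
  colax_counitl : forall (A B : Ob K) (f : Hom K A B),
      cst (f_equal (fmap1 F) (comp1_idl f)) (comp1_idl (fmap1 F f))
        ((colax0 F B ⊙ id2 (fmap1 F f)) • colax2 F (id1 B) f) = id2 (fmap1 F f);
  colax_counitr : forall (A B : Ob K) (f : Hom K A B),
      cst (f_equal (fmap1 F) (comp1_idr f)) (comp1_idr (fmap1 F f))
        ((id2 (fmap1 F f) ⊙ colax0 F A) • colax2 F f (id1 A)) = id2 (fmap1 F f);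
  nu_nat : forall (A : Ob K) (f f' g g' : Hom K A A) (a : Cell f f') (b : Cell g g'),
      fnu F f' g' • (fmap2 F a ⊙ fmap2 F b) = (fmap2 F b ⊙ fmap2 F a) • fnu F f g;
  nu_yb : forall (A : Ob K) (f g h : Hom K A A),
      let Ff := fmap1 F f in let Fg := fmap1 F g in let Fh := fmap1 F h in
      (fnu F g f ⊙ id2 Fh) • cst (comp1A Fg Fh Ff) (comp1A Fg Ff Fh) (id2 Fg ⊙ fnu F h f)
        • (fnu F h g ⊙ id2 Ff)
      = cst (comp1A Ff Fh Fg) (comp1A Ff Fg Fh) (id2 Ff ⊙ fnu F h g) • (fnu F h f ⊙ id2 Fg)
        • cst (comp1A Fh Fg Ff) (comp1A Fh Ff Fg) (id2 Fh ⊙ fnu F g f);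
  nu_lax_l : forall (A : Ob K) (f g h : Hom K A A),
      let Ff := fmap1 F f in let Fg := fmap1 F g in let Fh := fmap1 F h in
      cst (comp1A Ff Fg Fh) eq_refl (fnu F f (g ∘ h) • (id2 Ff ⊙ lax2 F g h))
      = (lax2 F g h ⊙ id2 Ff) • cst (comp1A Fg Ff Fh) (comp1A Fg Fh Ff) (id2 Fg ⊙ fnu F f h)
        • (fnu F f g ⊙ id2 Fh);
  nu_lax_r : forall (A : Ob K) (f g h : Hom K A A),
      let Ff := fmap1 F f in let Fg := fmap1 F g in let Fh := fmap1 F h in
      cst (eq_sym (comp1A Fg Fh Ff)) eq_refl (fnu F (g ∘ h) f • (lax2 F g h ⊙ id2 Ff))
      = (id2 Ff ⊙ lax2 F g h)
        • cst (eq_sym (comp1A Fg Ff Fh)) (eq_sym (comp1A Ff Fg Fh)) (fnu F g f ⊙ id2 Fh)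
        • (id2 Fg ⊙ fnu F h f);
  nu_lax0_l : forall (A : Ob K) (f : Hom K A A),
      cst (comp1_idr (fmap1 F f)) eq_refl (fnu F f (id1 A) • (id2 (fmap1 F f) ⊙ lax0 F A))
      = cst (comp1_idl (fmap1 F f)) eq_refl (lax0 F A ⊙ id2 (fmap1 F f));
  nu_lax0_r : forall (A : Ob K) (f : Hom K A A),
      cst (comp1_idl (fmap1 F f)) eq_refl (fnu F (id1 A) f • (lax0 F A ⊙ id2 (fmap1 F f)))
      = cst (comp1_idr (fmap1 F f)) eq_refl (id2 (fmap1 F f) ⊙ lax0 F A);
  nu_colax_l : forall (A : Ob K) (f g h : Hom K A A),
      let Ff := fmap1 F f in let Fg := fmap1 F g in let Fh := fmap1 F h in
      (colax2 F g h ⊙ id2 Ff) • fnu F f (g ∘ h)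
      = cst eq_refl (comp1A Fg Fh Ff)
          ((id2 Fg ⊙ fnu F f h)
           • cst (eq_sym (comp1A Ff Fg Fh)) (eq_sym (comp1A Fg Ff Fh)) (fnu F f g ⊙ id2 Fh)
           • (id2 Ff ⊙ colax2 F g h));
  nu_colax_r : forall (A : Ob K) (f g h : Hom K A A),
      let Ff := fmap1 F f in let Fg := fmap1 F g in let Fh := fmap1 F h in
      (id2 Ff ⊙ colax2 F g h) • fnu F (g ∘ h) f
      = cst eq_refl (eq_sym (comp1A Ff Fg Fh))
          ((fnu F g f ⊙ id2 Fh)
           • cst (comp1A Fg Fh Ff) (comp1A Fg Ff Fh) (id2 Fg ⊙ fnu F h f)
           • (colax2 F g h ⊙ id2 Ff));
  nu_colax0_l : forall (A : Ob K) (f : Hom K A A),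
      cst eq_refl (comp1_idl (fmap1 F f)) ((colax0 F A ⊙ id2 (fmap1 F f)) • fnu F f (id1 A))
      = cst eq_refl (comp1_idr (fmap1 F f)) (id2 (fmap1 F f) ⊙ colax0 F A);
  nu_colax0_r : forall (A : Ob K) (f : Hom K A A),
      cst eq_refl (comp1_idr (fmap1 F f)) ((id2 (fmap1 F f) ⊙ colax0 F A) • fnu F (id1 A) f)
      = cst eq_refl (comp1_idl (fmap1 F f)) (colax0 F A ⊙ id2 (fmap1 F f));
  uc_lax0 : forall A : Ob K,
      cst (comp1_idl (id1 (fo F A))) eq_refl (lax0 F A ⊙ lax0 F A)
      = colax2 F (id1 A) (id1 A)
        • cst eq_refl (f_equal (fmap1 F) (eq_sym (comp1_idl (id1 A)))) (lax0 F A);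
  uc_colax0 : forall A : Ob K,
      cst eq_refl (comp1_idl (id1 (fo F A))) (colax0 F A ⊙ colax0 F A)
      = colax0 F A
        • cst eq_refl (f_equal (fmap1 F) (comp1_idl (id1 A))) (lax2 F (id1 A) (id1 A));
  uc_unit : forall A : Ob K, colax0 F A • lax0 F A = id2 (id1 (fo F A));
  bilaxity : forall (A B C : Ob K) (k : Hom K A B) (h f : Hom K B B) (g : Hom K B C),
      (lax2 F g h ⊙ lax2 F f k) • wmid (fmap1 F g) (fnu F f h) (fmap1 F k)
        • (colax2 F g f ⊙ colax2 F h k)
      = colax2 F (g ∘ h) (f ∘ k) • fmap2 F (wmid g (c B f h) k) • lax2 F (g ∘ f) (h ∘ k)
}.

Definition compatible_YB (K K' : TwoCatData) (F : LaxColaxData K K') (c' : YBdata K') : Prop :=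
  forall (A : Ob K) (f g : Hom K A A), fnu F f g = c' (fo F A) (fmap1 F f) (fmap1 F g).

Record is_rel_bimonad_module (K : TwoCatData) (c : YBdata K) (A B : Ob K)
  (b : Hom K A A) (mu : Cell (b ∘ b) b) (eta : Cell (id1 A) b)
  (De : Cell b (b ∘ b)) (ep : Cell b (id1 A))
  (x : Hom K A B) (act : Cell (x ∘ b) x) (coact : Cell x (x ∘ b)) : Prop := {
  rm_assoc : act • (act ⊙ id2 b) = act • cst (comp1A x b b) eq_refl (id2 x ⊙ mu);
  rm_unit : cst (comp1_idr x) eq_refl (act • (id2 x ⊙ eta)) = id2 x;
  rm_coassoc : (coact ⊙ id2 b) • coact = cst eq_refl (comp1A x b b) ((id2 x ⊙ De) • coact);
  rm_counit : cst eq_refl (comp1_idr x) ((id2 x ⊙ ep) • coact) = id2 x;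
  rm_compat : (act ⊙ mu) • wmid x (c A b b) b • (coact ⊙ De) = coact • act
}.

Arguments is_YB {K} c.
Arguments is_c_bimonad {K} c {A b} mu eta De ep.
Arguments is_bilax {K K'} c F.
Arguments compatible_YB {K K'} F c'.
Arguments is_rel_bimonad_module {K} c {A B b} mu eta De ep {x} act coact.

(* A bilax functor transports the five module axioms one at a time.  The
   action axioms use only the lax structure (naturality, associativity and
   right unitality of F^2, F^0), the coaction axioms only the colax one, and
   the compatibility of action and coaction is the bilaxity condition for
   A -b-> A -b-> A -b-> A -x-> B, once c' on F(b), F(b) is identified with the
   operator nu of F. *)

From Stdlib Require Import ProofIrrelevance.

Section Transport.
Context {K : TwoCatData} {A B : Ob K}.

Lemma cst_vcomp {f f' g g' h h' : Hom K A B}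
  (e1 : f = f') (e2 e2' : g = g') (e3 : h = h') (b : Cell g h) (a : Cell f g) :
  cst e2 e3 b • cst e1 e2' a = cst e1 e3 (b • a).
Proof. rewrite (proof_irrelevance _ e2' e2). subst. reflexivity. Qed.

Lemma cst_vcompr {f f' g h : Hom K A B} (e : f = f') (b : Cell g h) (a : Cell f g) :
  b • cst e eq_refl a = cst e eq_refl (b • a).
Proof. subst. reflexivity. Qed.

Lemma cst_trans {f f' f'' g g' g'' : Hom K A B}
  (e1 : f = f') (e2 : g = g') (e1' : f' = f'') (e2' : g' = g'') (a : Cell f g) :
  cst e1' e2' (cst e1 e2 a) = cst (eq_trans e1 e1') (eq_trans e2 e2') a.
Proof. subst. reflexivity. Qed.

Lemma cst_id {f g : Hom K A B} (e1 : f = f) (e2 : g = g) (a : Cell f g) : cst e1 e2 a = a.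
Proof.
  rewrite (proof_irrelevance _ e1 eq_refl), (proof_irrelevance _ e2 eq_refl).
  reflexivity.
Qed.

Lemma cst_sym_eq {f f' g g' : Hom K A B} (e1 : f = f') (e2 : g = g')
  (a : Cell f g) (b : Cell f' g') :
  cst e1 e2 a = b -> a = cst (eq_sym e1) (eq_sym e2) b.
Proof. intros <-. subst. reflexivity. Qed.

End Transport.

Section TwoCatLaws.
Context {K : TwoCat}.

Lemma vcomp_assoc {A B : Ob K} {f g h k : Hom K A B}
  (c : Cell h k) (b : Cell g h) (a : Cell f g) :
  c • (b • a) = (c • b) • a.
Proof. exact (vcompA _ (tc_ax K) _ _ _ _ _ _ c b a). Qed.

Lemma vcomp_id2l {A B : Ob K} {f g : Hom K A B} (a : Cell f g) : id2 g • a = a.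
Proof. exact (vcomp_idl _ (tc_ax K) _ _ _ _ a). Qed.

Lemma interchange_law {A B C : Ob K} {g g' g'' : Hom K B C} {f f' f'' : Hom K A B}
  (b' : Cell g' g'') (b : Cell g g') (a' : Cell f' f'') (a : Cell f f') :
  (b' • b) ⊙ (a' • a) = (b' ⊙ a') • (b ⊙ a).
Proof. exact (interchange _ (tc_ax K) _ _ _ _ _ _ _ _ _ b' b a' a). Qed.

Lemma whiskerr_vcomp {A B C : Ob K} {g g' g'' : Hom K B C} {f : Hom K A B}
  (b' : Cell g' g'') (b : Cell g g') :
  (b' • b) ⊙ id2 f = (b' ⊙ id2 f) • (b ⊙ id2 f).
Proof. rewrite <- interchange_law, vcomp_id2l. reflexivity. Qed.

Lemma whiskerl_vcomp {A B C : Ob K} {g : Hom K B C} {f f' f'' : Hom K A B}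
  (a' : Cell f' f'') (a : Cell f f') :
  id2 g ⊙ (a' • a) = (id2 g ⊙ a') • (id2 g ⊙ a).
Proof. rewrite <- interchange_law, vcomp_id2l. reflexivity. Qed.

End TwoCatLaws.

Lemma fmap2_cst {K K' : TwoCatData} (F : LaxColaxData K K') {A B : Ob K}
  {f f' g g' : Hom K A B} (e1 : f = f') (e2 : g = g') (a : Cell f g) :
  fmap2 F (cst e1 e2 a) = cst (f_equal (fmap1 F) e1) (f_equal (fmap1 F) e2) (fmap2 F a).
Proof. subst. reflexivity. Qed.

Section FunctorImage.
Context {K K' : TwoCat} (F : LaxColaxData K K').

Hypothesis fmap2_vcomp : forall (A B : Ob K) (f g h : Hom K A B) (b : Cell g h) (a : Cell f g),
  fmap2 F (b • a) = fmap2 F b • fmap2 F a.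
Hypothesis fmap2_id2 : forall (A B : Ob K) (f : Hom K A B),
  fmap2 F (id2 f) = id2 (fmap1 F f).
Hypothesis lax2_natural : forall (A B C : Ob K) (g g' : Hom K B C) (f f' : Hom K A B)
  (b : Cell g g') (a : Cell f f'),
  lax2 F g' f' • (fmap2 F b ⊙ fmap2 F a) = fmap2 F (b ⊙ a) • lax2 F g f.
Hypothesis colax2_natural : forall (A B C : Ob K) (g g' : Hom K B C) (f f' : Hom K A B)
  (b : Cell g g') (a : Cell f f'),
  (fmap2 F b ⊙ fmap2 F a) • colax2 F g f = colax2 F g' f' • fmap2 F (b ⊙ a).

Section Whiskering.
Context {A B C : Ob K}.

Lemma lax2_natural_whiskerr {g g' : Hom K B C} (f : Hom K A B) (b : Cell g g') :
  lax2 F g' f • (fmap2 F b ⊙ id2 (fmap1 F f)) = fmap2 F (b ⊙ id2 f) • lax2 F g f.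
Proof. rewrite <- fmap2_id2. apply lax2_natural. Qed.

Lemma lax2_natural_whiskerl (g : Hom K B C) {f f' : Hom K A B} (a : Cell f f') :
  lax2 F g f' • (id2 (fmap1 F g) ⊙ fmap2 F a) = fmap2 F (id2 g ⊙ a) • lax2 F g f.
Proof. rewrite <- fmap2_id2. apply lax2_natural. Qed.

Lemma colax2_natural_whiskerr {g g' : Hom K B C} (f : Hom K A B) (b : Cell g g') :
  (fmap2 F b ⊙ id2 (fmap1 F f)) • colax2 F g f = colax2 F g' f • fmap2 F (b ⊙ id2 f).
Proof. rewrite <- fmap2_id2. apply colax2_natural. Qed.

Lemma colax2_natural_whiskerl (g : Hom K B C) {f f' : Hom K A B} (a : Cell f f') :
  (id2 (fmap1 F g) ⊙ fmap2 F a) • colax2 F g f = colax2 F g f' • fmap2 F (id2 g ⊙ a).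
Proof. rewrite <- fmap2_id2. apply colax2_natural. Qed.

End Whiskering.

Section LaxImage.
Hypothesis lax2_associative : forall (A B C D : Ob K) (h : Hom K C D) (g : Hom K B C)
  (f : Hom K A B),
  cst (comp1A (fmap1 F h) (fmap1 F g) (fmap1 F f)) (f_equal (fmap1 F) (comp1A h g f))
    (lax2 F h (g ∘ f) • (id2 (fmap1 F h) ⊙ lax2 F g f))
  = lax2 F (h ∘ g) f • (lax2 F h g ⊙ id2 (fmap1 F f)).
Hypothesis lax2_unitalr : forall (A B : Ob K) (f : Hom K A B),
  cst (comp1_idr (fmap1 F f)) (f_equal (fmap1 F) (comp1_idr f))
    (lax2 F f (id1 A) • (id2 (fmap1 F f) ⊙ lax0 F A)) = id2 (fmap1 F f).

Context {A B : Ob K} {b : Hom K A A} {x : Hom K A B} (act : Cell (x ∘ b) x).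

Lemma fmap_act_assoc (mu : Cell (b ∘ b) b) :
  act • (act ⊙ id2 b) = act • cst (comp1A x b b) eq_refl (id2 x ⊙ mu) ->
  (fmap2 F act • lax2 F x b) • ((fmap2 F act • lax2 F x b) ⊙ id2 (fmap1 F b))
  = (fmap2 F act • lax2 F x b)
    • cst (comp1A (fmap1 F x) (fmap1 F b) (fmap1 F b)) eq_refl
        (id2 (fmap1 F x) ⊙ (fmap2 F mu • lax2 F b b)).
Proof.
  intro act_assoc.
  rewrite whiskerr_vcomp, whiskerl_vcomp, !vcomp_assoc.
  rewrite <- (vcomp_assoc (fmap2 F act) (lax2 F x b)), lax2_natural_whiskerr.
  rewrite vcomp_assoc, <- fmap2_vcomp, act_assoc, fmap2_vcomp, fmap2_cst.
  rewrite <- !vcomp_assoc, <- lax2_associative, cst_vcomp, cst_vcompr.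
  rewrite (vcomp_assoc (lax2 F x b)), lax2_natural_whiskerl.
  rewrite !vcomp_assoc. reflexivity.
Qed.

Lemma fmap_act_unit (eta : Cell (id1 A) b) :
  cst (comp1_idr x) eq_refl (act • (id2 x ⊙ eta)) = id2 x ->
  cst (comp1_idr (fmap1 F x)) eq_refl
    ((fmap2 F act • lax2 F x b) • (id2 (fmap1 F x) ⊙ (fmap2 F eta • lax0 F A)))
  = id2 (fmap1 F x).
Proof.
  intro act_unit; apply cst_sym_eq in act_unit.
  pose proof (cst_sym_eq _ _ _ _ (lax2_unitalr _ _ x)) as lax2_unit.
  rewrite whiskerl_vcomp, !vcomp_assoc.
  rewrite <- (vcomp_assoc (fmap2 F act)), lax2_natural_whiskerl.
  rewrite vcomp_assoc, <- fmap2_vcomp, act_unit, fmap2_cst, fmap2_id2.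
  rewrite <- vcomp_assoc, lax2_unit, cst_vcomp, cst_trans, cst_id.
  apply vcomp_id2l.
Qed.

End LaxImage.

Section ColaxImage.
Hypothesis colax2_coassociative : forall (A B C D : Ob K) (h : Hom K C D) (g : Hom K B C)
  (f : Hom K A B),
  cst (f_equal (fmap1 F) (comp1A h g f)) (comp1A (fmap1 F h) (fmap1 F g) (fmap1 F f))
    ((id2 (fmap1 F h) ⊙ colax2 F g f) • colax2 F h (g ∘ f))
  = (colax2 F h g ⊙ id2 (fmap1 F f)) • colax2 F (h ∘ g) f.
Hypothesis colax2_counitalr : forall (A B : Ob K) (f : Hom K A B),
  cst (f_equal (fmap1 F) (comp1_idr f)) (comp1_idr (fmap1 F f))
    ((id2 (fmap1 F f) ⊙ colax0 F A) • colax2 F f (id1 A)) = id2 (fmap1 F f).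

Context {A B : Ob K} {b : Hom K A A} {x : Hom K A B} (coact : Cell x (x ∘ b)).

Lemma fmap_coact_coassoc (De : Cell b (b ∘ b)) :
  (coact ⊙ id2 b) • coact = cst eq_refl (comp1A x b b) ((id2 x ⊙ De) • coact) ->
  ((colax2 F x b • fmap2 F coact) ⊙ id2 (fmap1 F b)) • (colax2 F x b • fmap2 F coact)
  = cst eq_refl (comp1A (fmap1 F x) (fmap1 F b) (fmap1 F b))
      ((id2 (fmap1 F x) ⊙ (colax2 F b b • fmap2 F De)) • (colax2 F x b • fmap2 F coact)).
Proof.
  intro coact_coassoc.
  rewrite whiskerr_vcomp, whiskerl_vcomp, !vcomp_assoc.
  rewrite <- (vcomp_assoc (colax2 F x b ⊙ id2 (fmap1 F b))), colax2_natural_whiskerr.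
  rewrite !vcomp_assoc, <- (vcomp_assoc _ (fmap2 F (coact ⊙ id2 b))), <- fmap2_vcomp.
  rewrite coact_coassoc, fmap2_cst, <- colax2_coassociative, cst_vcomp.
  f_equal.
  rewrite <- (vcomp_assoc _ (id2 (fmap1 F x) ⊙ fmap2 F De)), colax2_natural_whiskerl.
  rewrite fmap2_vcomp, !vcomp_assoc. reflexivity.
Qed.

Lemma fmap_coact_counit (ep : Cell b (id1 A)) :
  cst eq_refl (comp1_idr x) ((id2 x ⊙ ep) • coact) = id2 x ->
  cst eq_refl (comp1_idr (fmap1 F x))
    ((id2 (fmap1 F x) ⊙ (colax0 F A • fmap2 F ep)) • (colax2 F x b • fmap2 F coact))
  = id2 (fmap1 F x).
Proof.
  intro coact_counit; apply cst_sym_eq in coact_counit.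
  pose proof (cst_sym_eq _ _ _ _ (colax2_counitalr _ _ x)) as colax2_counit.
  rewrite whiskerl_vcomp, !vcomp_assoc.
  rewrite <- (vcomp_assoc _ (id2 (fmap1 F x) ⊙ fmap2 F ep)), colax2_natural_whiskerl.
  rewrite !vcomp_assoc, colax2_counit, <- vcomp_assoc, <- fmap2_vcomp, coact_counit.
  rewrite fmap2_cst, fmap2_id2, cst_vcomp, cst_trans, cst_id.
  apply vcomp_id2l.
Qed.

End ColaxImage.

Section BilaxImage.
Variable c : YBdata K.
Hypothesis bilaxity : forall (A B C : Ob K) (k : Hom K A B) (h f : Hom K B B) (g : Hom K B C),
  (lax2 F g h ⊙ lax2 F f k) • wmid (fmap1 F g) (fnu F f h) (fmap1 F k)
    • (colax2 F g f ⊙ colax2 F h k)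
  = colax2 F (g ∘ h) (f ∘ k) • fmap2 F (wmid g (c B f h) k) • lax2 F (g ∘ f) (h ∘ k).

Lemma fmap_act_coact_compat {A B : Ob K} {b : Hom K A A} {x : Hom K A B}
  (mu : Cell (b ∘ b) b) (De : Cell b (b ∘ b))
  (act : Cell (x ∘ b) x) (coact : Cell x (x ∘ b)) :
  (act ⊙ mu) • wmid x (c A b b) b • (coact ⊙ De) = coact • act ->
  ((fmap2 F act • lax2 F x b) ⊙ (fmap2 F mu • lax2 F b b))
    • wmid (fmap1 F x) (fnu F b b) (fmap1 F b)
    • ((colax2 F x b • fmap2 F coact) ⊙ (colax2 F b b • fmap2 F De))
  = (colax2 F x b • fmap2 F coact) • (fmap2 F act • lax2 F x b).
Proof.
  intro act_coact_compat.
  rewrite !interchange_law, !vcomp_assoc.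
  rewrite <- (vcomp_assoc (colax2 F x b) (fmap2 F coact)), <- fmap2_vcomp.
  rewrite <- act_coact_compat, !fmap2_vcomp, !vcomp_assoc, <- colax2_natural.
  rewrite <- (vcomp_assoc _ (fmap2 F (coact ⊙ De))), <- lax2_natural.
  rewrite <- 2!(vcomp_assoc (fmap2 F act ⊙ fmap2 F mu)), bilaxity.
  rewrite !vcomp_assoc. reflexivity.
Qed.

End BilaxImage.
End FunctorImage.

Theorem proposition4p18 (K K' : TwoCat) (c : YBdata K) (c' : YBdata K')
  (Hc : is_YB c) (Hc' : is_YB c')
  (F : LaxColaxData K K') (HF : is_bilax c F) (Hcomp : compatible_YB F c')
  (A B : Ob K) (b : Hom K A A)
  (mu : Cell (b ∘ b) b) (eta : Cell (id1 A) b)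
  (De : Cell b (b ∘ b)) (ep : Cell b (id1 A))
  (Hb : is_c_bimonad c mu eta De ep)
  (x : Hom K A B) (act : Cell (x ∘ b) x) (coact : Cell x (x ∘ b))
  (Hx : is_rel_bimonad_module c mu eta De ep act coact) :
  is_rel_bimonad_module c'
    (fmap2 F mu • lax2 F b b) (fmap2 F eta • lax0 F A)
    (colax2 F b b • fmap2 F De) (colax0 F A • fmap2 F ep)
    (fmap2 F act • lax2 F x b) (colax2 F x b • fmap2 F coact).
Proof.
  destruct HF as [Fvcomp Fid2 lax_nat lax_assoc _ lax_unitr
                  colax_nat colax_coassoc _ colax_counitr _ _ _ _ _ _ _ _ _ _ _ _ _ bilax].
  destruct Hx as [act_assoc act_unit coact_coassoc coact_counit act_coact_compat].
  constructor.
  - exact (fmap_act_assoc F Fvcomp Fid2 lax_nat lax_assoc act mu act_assoc).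
  - exact (fmap_act_unit F Fvcomp Fid2 lax_nat lax_unitr act eta act_unit).
  - exact (fmap_coact_coassoc F Fvcomp Fid2 colax_nat colax_coassoc coact De coact_coassoc).
  - exact (fmap_coact_counit F Fvcomp Fid2 colax_nat colax_counitr coact ep coact_counit).
  - rewrite <- Hcomp.
    exact (fmap_act_coact_compat F Fvcomp lax_nat colax_nat c bilax mu De act coact
             act_coact_compat).
Qed.
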